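(* Consider a binary node classification problem on a graph in which every node has exactly $d$ neighbours (self-loops having been added), node labels lie in $\{0,1\}$, and, given that a center node has label $c\in\{0,1\}$, each of its neighbours has the same label $c$ with probability $P_c\in[0,1]$. Let $X_0, X_1$ be independent random feature vectors in $\mathbb{R}^{\iota}$ distributed as the node features of class $0$ and class $1$, with means $\mu_{X_0},\mu_{X_1}$. Consider a one-layer GCN without non-linear activation, with kernel $W\neq 0$, so that the output representation of a node of class $0$ is $O_0=W\big(P_0X_0+(1-P_0)X_1\big)$ and that of a node of class $1$ is $O_1=W\big(P_1X_1+(1-P_1)X_0\big)$. Put $\sigma_c^2=\mathbb{E}\|W(X_c-\mu_{X_c})\|^2$ for $c=0,1$, and assume $\sigma_0>0$ and $\sigma_1>0$. Define $S_c=\big(\mathbb{E}\|O_c-\mathbb{E}O_c\|^2\big)^{1/2}$ for $c=0,1$, $M_{0,1}=\|\mathbb{E}O_0-\mathbb{E}O_1\|$, and the complexity measure $\mathcal{C}=(S_0+S_1)/M_{0,1}$ (with $\mathcal{C}=+\infty$ if $M_{0,1}=0$). Then $\mathcal{C}\to+\infty$ as $|P_0+P_1-1|\to 0$.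
   Context: The complexity measure is the ''Consistency of Representations'' measure based on the Davies–Bouldin index with $p=2$ and $k=2$ classes: for classes $i,j$, $S_i$ is the root-mean-square distance of class-$i$ output representations to their centroid $\mu_{\mathcal{O}_i}$, $M_{i,j}=\|\mu_{\mathcal{O}_i}-\mu_{\mathcal{O}_j}\|_2$, and $\mathcal{C}=\frac{1}{k}\sum_i\max_{j\neq i}\frac{S_i+S_j}{M_{i,j}}$, which for $k=2$ equals $(S_0+S_1)/M_{0,1}$. A larger $\mathcal{C}$ is interpreted as worse generalization. The GCN layer (with mean aggregation over the $d$ neighbours including the self-loop) has output $W\sum_{j\in\mathcal{N}(v_i)}\frac{1}{d}x_j$; the paper models its output for a class-$c$ node as stated in the claim. *)

From HB Require Import structures.
From mathcomp Require Import all_boot all_order all_algebra.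
From mathcomp Require Import all_classical all_reals all_analysis.
Set Implicit Arguments. Unset Strict Implicit. Unset Printing Implicit Defensive.
Import Order.TTheory GRing.Theory Num.Theory.
Local Open Scope ring_scope.
Local Open Scope classical_set_scope.

Section GCNDefs.
Context {R : realType} {d : measure_display} {T : measurableType d}.

Definition enorm (n : nat) (v : 'cV[R]_n) : R := Num.sqrt (\sum_(i < n) v i ord0 ^+ 2).

(* componentwise expectation of a random vector (assumed integrable) *)
Definition Evec (P : probability T R) (n : nat) (X : T -> 'cV[R]_n) : 'cV[R]_n :=
  \col_i fine (expectation P (fun t => X t i ord0)).

Definition rvec (n : nat) (X : T -> 'cV[R]_n) : Prop :=
  forall i : 'I_n, measurable_fun setT (fun t => X t i ord0).

Definition L2vec (P : probability T R) (n : nat) (X : T -> 'cV[R]_n) : Prop :=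
  forall i : 'I_n, P.-integrable setT (fun t => ((X t i ord0) ^+ 2)%:E).

(* independence of two random vectors: the joint law factorizes on all
   measurable rectangles of R^n (a pi-system generating the Borel sets of R^n) *)
Definition indep_vec (P : probability T R) (n : nat) (X Y : T -> 'cV[R]_n) : Prop :=
  forall A B : 'I_n -> set R, (forall i, measurable (A i)) -> (forall i, measurable (B i)) ->
    P ([set t | forall i, A i (X t i ord0)] `&` [set t | forall i, B i (Y t i ord0)]) =
    (P [set t | forall i, A i (X t i ord0)] * P [set t | forall i, B i (Y t i ord0)])%E.

Definition var_norm (P : probability T R) (n : nat) (Z : T -> 'cV[R]_n) : R :=
  fine (expectation P (fun t => enorm (Z t - Evec P Z) ^+ 2)).

Definition O0 (k n : nat) (W : 'M[R]_(k, n)) (X0 X1 : T -> 'cV[R]_n) (P0 : R) :=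
  fun t => W *m (P0 *: X0 t + (1 - P0) *: X1 t).
Definition O1 (k n : nat) (W : 'M[R]_(k, n)) (X0 X1 : T -> 'cV[R]_n) (P1 : R) :=
  fun t => W *m (P1 *: X1 t + (1 - P1) *: X0 t).

Definition S_c (P : probability T R) (k : nat) (O : T -> 'cV[R]_k) : R :=
  Num.sqrt (var_norm P O).
Definition M01 (P : probability T R) (k : nat) (Oa Ob : T -> 'cV[R]_k) : R :=
  enorm (Evec P Oa - Evec P Ob).
Definition complexity (P : probability T R) (k n : nat) (W : 'M[R]_(k, n))
  (X0 X1 : T -> 'cV[R]_n) (P0 P1 : R) : \bar R :=
  let Oa := O0 W X0 X1 P0 in let Ob := O1 W X0 X1 P1 in
  if M01 P Oa Ob == 0 then +oo%E
  else ((S_c P Oa + S_c P Ob) / M01 P Oa Ob)%:E.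

End GCNDefs.

(* Since X0 and X1 are independent, the coordinates of W X0 and W X1 are
   uncorrelated, so the spread of a class-0 output is
   S_0^2 = P0^2 s0 + (1 - P0)^2 s1 with s_c = E ||W (X_c - mu_c)||^2, and this
   mixture never drops below s0 s1 / (s0 + s1) > 0; likewise for S_1.  The
   centroids, on the other hand, differ by (P0 + P1 - 1) W (mu_0 - mu_1), so
   M_{0,1} = |P0 + P1 - 1| ||W (mu_0 - mu_1)|| tends to 0 and the ratio
   (S_0 + S_1) / M_{0,1} blows up. *)

From HB Require Import structures.
From mathcomp Require Import all_boot all_order all_algebra.
From mathcomp Require Import all_classical all_reals all_analysis.
From mathcomp Require Import measurable_realfun ring lra.
Import Order.TTheory GRing.Theory Num.Theory.
Local Open Scope ring_scope.
Local Open Scope classical_set_scope.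
Set Implicit Arguments. Unset Strict Implicit.

Section independent_real_variables.
Context d (T : measurableType d) (R : realType) (P : probability T R).

Definition indep_real (f g : T -> R) : Prop :=
  forall A B, measurable A -> measurable B ->
    P (f @^-1` A `&` g @^-1` B) = (P (f @^-1` A) * P (g @^-1` B))%E.

Lemma Lfun_measurable p (f : T -> R) : f \in Lfun P p -> measurable_fun setT f.
Proof. by move/sub_Lfun_mfun; rewrite inE. Qed.

Lemma integral_distribution_id (F : {mfun T >-> R}) :
  P.-integrable setT (EFin \o F) ->
  (distribution P F).-integrable setT (fun y : R => y%:E) /\
  (\int[distribution P F]_y y%:E = \int[P]_x (F x)%:E)%E.
Proof.
move=> intF; have mEFin : measurable_fun [set: R] (@EFin R).
  by apply/measurable_EFinP; exact: measurable_id.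
split; last by rewrite integral_distribution.
apply/integrableP; split => //.
rewrite ge0_integral_distribution //; last exact: measurableT_comp.
by case/integrableP: intF.
Qed.

Lemma expectationM_indep (f g : T -> R) : indep_real f g ->
  f \in Lfun P 1 -> g \in Lfun P 1 -> (f * g)%R \in Lfun P 1 ->
  ('E_P[f * g] = 'E_P[f] * 'E_P[g])%E.
Proof.
move=> fg f1 g1 fg1; rewrite !unlock.
pose F : {mfun T >-> R} := HB.pack f (isMeasurableFun.Build _ _ _ _ f (Lfun_measurable f1)).
pose G : {mfun T >-> R} := HB.pack g (isMeasurableFun.Build _ _ _ _ g (Lfun_measurable g1)).
have mFG : measurable_fun setT (fun t => (f t, g t)).
  exact: measurable_fun_pair (Lfun_measurable f1) (Lfun_measurable g1).
pose FG : {mfun T >-> (R * R)%type} := HB.pack (fun t => (f t, g t))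
  (isMeasurableFun.Build _ _ _ _ _ mFG).
pose law_f := distribution P F; pose law_g := distribution P G.
(* Independence says the joint law of (f, g) agrees with the product of the
   marginals on rectangles, hence everywhere; Fubini then splits the integral. *)
have joint_law X : measurable X -> (law_f \x law_g)%E X = distribution P FG X.
  by apply: product_measure_unique => A B mA mB; exact: fg.
pose k z : \bar R := (z.1 * z.2)%:E.
have mk : measurable_fun setT k.
  by apply/measurable_EFinP; apply: measurable_funM; [exact: measurable_fst | exact: measurable_snd].
have [intf Ef] := @integral_distribution_id F ((Lfun1_integrable _ _).1 f1).
have [intg Eg] := @integral_distribution_id G ((Lfun1_integrable _ _).1 g1).
have intk : (law_f \x law_g)%E.-integrable setT k.
  apply/integrableP; split => //.
  rewrite (eq_measure_integral (distribution P FG)); last by move=> A mA _; exact: joint_law.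
  rewrite ge0_integral_distribution //; last by apply: measurableT_comp => //; exact: measurable_abse.
  by case/integrableP: ((Lfun1_integrable _ _).1 fg1).
have -> : (\int[P]_x (f x * g x)%:E = \int[law_f \x law_g]_z k z)%E.
  rewrite (eq_measure_integral (distribution P FG)); last by move=> A mA _; exact: joint_law.
  by rewrite integral_distribution //; exact: (Lfun1_integrable _ _).1 fg1.
rewrite -integral12_prod_meas1 // /fubini_F /k /=.
have fin_g : (\int[law_g]_y y%:E)%E \is a fin_num by exact: integrable_fin_num.
under eq_integral => x _ do (under eq_integral => y _ do rewrite EFinM; rewrite integralZl //).
by rewrite -(fineK fin_g) integralZr // fineK // -Ef -Eg.
Qed.

Let two_ge1 : (1 <= 2%:E :> \bar R)%E. Proof. by rewrite lee1n. Qed.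
Let finP : P setT \is a fin_num. Proof. by rewrite probability_setT. Qed.

Lemma covariance_indep (f g : T -> R) : indep_real f g ->
  f \in Lfun P 2%:E -> g \in Lfun P 2%:E -> covariance P f g = 0%E.
Proof.
move=> fg f2 g2; have f1 := Lfun_subset12 finP f2; have g1 := Lfun_subset12 finP g2.
have fg1 := Lfun2_mul_Lfun1 f2 g2.
rewrite covarianceE // expectationM_indep // subee //.
by rewrite fin_numM // expectation_fin_num.
Qed.

Lemma covariance_sum_l (I : Type) (r : seq I) (F : I -> T -> R) (g : T -> R) :
  (forall i, F i \in Lfun P 2%:E) -> g \in Lfun P 2%:E ->
  covariance P (\sum_(i <- r) F i) g = (\sum_(i <- r) covariance P (F i) g)%E.
Proof.
move=> F2 g2; elim: r => [|i r IHr].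
  by rewrite !big_nil covariance_cst_l.
by rewrite !big_cons covarianceDl ?rpred_sum // IHr.
Qed.

Lemma covariance_sum_r (I : Type) (r : seq I) (f : T -> R) (G : I -> T -> R) :
  f \in Lfun P 2%:E -> (forall i, G i \in Lfun P 2%:E) ->
  covariance P f (\sum_(i <- r) G i) = (\sum_(i <- r) covariance P f (G i))%E.
Proof.
move=> f2 G2; rewrite covarianceC covariance_sum_l //.
by apply: eq_bigr => i _; rewrite covarianceC.
Qed.

End independent_real_variables.

Section random_vectors.
Context d (T : measurableType d) (R : realType) (P : probability T R).

Definition vcoord n (X : T -> 'cV[R]_n) (i : 'I_n) : T -> R := fun t => X t i ord0.

Definition Lvec p n (X : T -> 'cV[R]_n) : Prop := forall i, vcoord X i \in Lfun P p.

Let two_ge1 : (1 <= 2%:E :> \bar R)%E. Proof. by rewrite lee1n. Qed.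
Let finP : P setT \is a fin_num. Proof. by rewrite probability_setT. Qed.

Lemma expectation_big (I : Type) (r : seq I) (F : I -> T -> R) :
  (forall i, F i \in Lfun P 1) -> ('E_P[\sum_(i <- r) F i] = \sum_(i <- r) 'E_P[F i])%E.
Proof.
move=> F1; elim: r => [|i r IHr]; first by rewrite !big_nil expectation_cst.
by rewrite !big_cons expectationD ?rpred_sum // IHr.
Qed.

Lemma Lvec_L2vec n (X : T -> 'cV[R]_n) : rvec X -> L2vec P X -> Lvec 2%:E X.
Proof.
move=> mX X2 i; rewrite inE; apply/andP; split; first by rewrite inE; exact: mX.
rewrite inE /= /finite_norm unlock /=; apply: poweR_lty.
case/integrableP: (X2 i) => _; apply: le_lt_trans; rewrite le_eqVlt; apply/orP; left.
apply/eqP; apply: eq_integral => t _.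
by rewrite /= powR_mulrn // -normrX ger0_norm ?sqr_ge0 // ger0_norm ?sqr_ge0.
Qed.

Lemma Lvec_subset12 n (X : T -> 'cV[R]_n) : Lvec 2%:E X -> Lvec 1 X.
Proof. by move=> X2 i; exact: Lfun_subset12. Qed.

Lemma vcoord_mulmx k n (A : 'M[R]_(k, n)) (X : T -> 'cV[R]_n) l :
  vcoord (fun t => A *m X t) l = \sum_i A l i \o* vcoord X i.
Proof.
by apply/funext => t; rewrite /vcoord mxE fct_sumE; apply: eq_bigr => i _; rewrite mulrC.
Qed.

Lemma Lvec_mulmx (p : R) k n (A : 'M[R]_(k, n)) (X : T -> 'cV[R]_n) : 1 <= p ->
  Lvec p%:E X -> Lvec p%:E (fun t => A *m X t).
Proof.
move=> p1 Xp l; have p1' : (1 <= p%:E)%E by rewrite lee_fin.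
by rewrite vcoord_mulmx; apply: rpred_sum => i _; exact: Lfun_scale.
Qed.

Lemma Evec_mulmx k n (A : 'M[R]_(k, n)) (X : T -> 'cV[R]_n) : Lvec 1 X ->
  Evec P (fun t => A *m X t) = A *m Evec P X.
Proof.
move=> X1; apply/matrixP => l j; rewrite (ord1 j) !mxE.
rewrite -[fun t => _]/(vcoord (fun t => A *m X t) l) vcoord_mulmx expectation_big; last first.
  by move=> i; exact: Lfun_scale.
rewrite -sum_fine; last by move=> i _; rewrite expectationZl ?fin_numM ?expectation_fin_num.
by apply: eq_bigr => i _; rewrite expectationZl // mxE fineM ?expectation_fin_num.
Qed.

Lemma EvecD n (X Y : T -> 'cV[R]_n) : Lvec 1 X -> Lvec 1 Y ->
  Evec P (fun t => X t + Y t) = Evec P X + Evec P Y.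
Proof.
move=> X1 Y1; apply/matrixP => i j; rewrite !mxE.
rewrite (_ : (fun t => _) = vcoord X i \+ vcoord Y i); last by apply/funext => t; rewrite mxE.
by rewrite expectationD // fineD ?expectation_fin_num.
Qed.

Lemma enormZ n c (v : 'cV[R]_n) : enorm (c *: v) = `|c| * enorm v.
Proof.
rewrite /enorm; under eq_bigr do rewrite mxE exprMn.
by rewrite -mulr_sumr sqrtrM ?sqr_ge0 // sqrtr_sqr.
Qed.

Lemma var_norm_variance n (Z : T -> 'cV[R]_n) : Lvec 2%:E Z ->
  var_norm P Z = \sum_l fine 'V_P[vcoord Z l].
Proof.
move=> Z2; pose D l := vcoord Z l \- cst (fine 'E_P[vcoord Z l]).
have D2 l : D l \in Lfun P 2%:E by rewrite rpredB ?Lfun_cst.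
have sqnorm : (fun t => enorm (Z t - Evec P Z) ^+ 2) = \sum_l (D l * D l).
  apply/funext => t; rewrite fct_sumE /enorm sqr_sqrtr; last first.
    by apply: sumr_ge0 => l _; exact: sqr_ge0.
  by apply: eq_bigr => l _; rewrite !mxE.
rewrite /var_norm sqnorm expectation_big; last by move=> l; exact: Lfun2_mul_Lfun1.
rewrite -sum_fine; last by move=> l _; rewrite expectation_fin_num ?Lfun2_mul_Lfun1.
by apply: eq_bigr => l _; rewrite /variance covariance.unlock.
Qed.

Lemma var_normZ n c (Z : T -> 'cV[R]_n) : Lvec 2%:E Z ->
  var_norm P (fun t => c *: Z t) = c ^+ 2 * var_norm P Z.
Proof.
move=> Z2; have cZ2 : Lvec 2%:E (fun t => c *: Z t).
  move=> l; rewrite (_ : vcoord _ l = c \o* vcoord Z l); first exact: Lfun_scale.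
  by apply/funext => t; rewrite /vcoord mxE mulrC.
rewrite !var_norm_variance // mulr_sumr; apply: eq_bigr => l _.
rewrite (_ : vcoord _ l = c \o* vcoord Z l); last by apply/funext => t; rewrite /vcoord mxE mulrC.
by rewrite varianceZ // fineM ?variance_fin_num.
Qed.

Lemma var_normD_uncorrelated n (Z0 Z1 : T -> 'cV[R]_n) : Lvec 2%:E Z0 -> Lvec 2%:E Z1 ->
  (forall l, covariance P (vcoord Z0 l) (vcoord Z1 l) = 0%E) ->
  var_norm P (fun t => Z0 t + Z1 t) = var_norm P Z0 + var_norm P Z1.
Proof.
move=> Z02 Z12 cov0.
have vcoordD l : vcoord (fun t => Z0 t + Z1 t) l = vcoord Z0 l \+ vcoord Z1 l.
  by apply/funext => t; rewrite /vcoord mxE.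
have Z2 : Lvec 2%:E (fun t => Z0 t + Z1 t) by move=> l; rewrite vcoordD rpredD.
rewrite !var_norm_variance // -big_split; apply: eq_bigr => l _.
by rewrite vcoordD varianceD // cov0 mule0 adde0 fineD ?variance_fin_num.
Qed.

Lemma covariance_mulmx_eq0 k n (A B : 'M[R]_(k, n)) (X Y : T -> 'cV[R]_n) :
  Lvec 2%:E X -> Lvec 2%:E Y ->
  (forall i j, covariance P (vcoord X i) (vcoord Y j) = 0%E) ->
  forall l l', covariance P (vcoord (fun t => A *m X t) l) (vcoord (fun t => B *m Y t) l') = 0%E.
Proof.
move=> X2 Y2 cov0 l l'; rewrite !vcoord_mulmx covariance_sum_l; last 2 first.
- by move=> i; exact: Lfun_scale.
- by rewrite rpred_sum // => j _; exact: Lfun_scale.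
apply: big1 => i _; rewrite covariance_sum_r; last 2 first.
- exact: Lfun_scale.
- by move=> j; exact: Lfun_scale.
apply: big1 => j _.
have Xi1 := Lfun_subset12 finP (X2 i); have Yj1 := Lfun_subset12 finP (Y2 j).
rewrite covarianceZl ?Lfun_scale ?Lfun2_mul_Lfun1 //; last exact: Lfun_scale.
by rewrite covarianceZr ?Lfun2_mul_Lfun1 // cov0 !mule0.
Qed.

Lemma indep_vec_coord n (X Y : T -> 'cV[R]_n) : indep_vec P X Y ->
  forall i j, indep_real P (vcoord X i) (vcoord Y j).
Proof.
move=> XY i j A B mA mB.
pose cylinder (k : 'I_n) (C : set R) l := if l == k then C else setT.
have cylinderE (Z : T -> 'cV[R]_n) k C :
    [set t | forall l, cylinder k C l (Z t l ord0)] = vcoord Z k @^-1` C.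
  apply/seteqP; split => t /=; first by move/(_ k); rewrite /cylinder eqxx.
  by move=> Ct l; rewrite /cylinder; case: eqP => [->|].
rewrite -!cylinderE; apply: XY => l; rewrite /cylinder; case: eqP => _ //.
Qed.

End random_vectors.

Section gcn_outputs.
Context d (T : measurableType d) (R : realType) (P : probability T R) (k n : nat).
Variables (W : 'M[R]_(k, n)) (X0 X1 : T -> 'cV[R]_n).
Hypotheses (X0_L2 : Lvec P 2%:E X0) (X1_L2 : Lvec P 2%:E X1) (indepX : indep_vec P X0 X1).

Let mix a b := fun t => (a *: W) *m X0 t + (b *: W) *m X1 t.

Let O0_mix a : O0 W X0 X1 a = mix a (1 - a).
Proof. by apply/funext => t; rewrite /O0 /mix mulmxDr -!scalemxAr -!scalemxAl. Qed.

Let O1_mix a : O1 W X0 X1 a = mix (1 - a) a.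
Proof. by apply/funext => t; rewrite /O1 /mix mulmxDr addrC -!scalemxAr -!scalemxAl. Qed.

Let Lvec2_mulmx (A : 'M[R]_(k, n)) X : Lvec P 2%:E X -> Lvec P 2%:E (fun t => A *m X t).
Proof. by apply: Lvec_mulmx; rewrite ler1n. Qed.

Let var_norm_scaled c (X : T -> 'cV[R]_n) : Lvec P 2%:E X ->
  var_norm P (fun t => (c *: W) *m X t) = c ^+ 2 * var_norm P (fun t => W *m X t).
Proof.
move=> X2; rewrite -var_normZ; last exact: Lvec2_mulmx.
by congr var_norm; apply/funext => t; rewrite scalemxAl.
Qed.

Let var_norm_mix a b : var_norm P (mix a b) =
  a ^+ 2 * var_norm P (fun t => W *m X0 t) + b ^+ 2 * var_norm P (fun t => W *m X1 t).
Proof.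
rewrite var_normD_uncorrelated ?var_norm_scaled //; try exact: Lvec2_mulmx.
move=> l; apply: covariance_mulmx_eq0 => // i j.
exact: covariance_indep (indep_vec_coord indepX i j) (X0_L2 i) (X1_L2 j).
Qed.

Lemma var_norm_O0 a : var_norm P (O0 W X0 X1 a) =
  a ^+ 2 * var_norm P (fun t => W *m X0 t) + (1 - a) ^+ 2 * var_norm P (fun t => W *m X1 t).
Proof. by rewrite O0_mix var_norm_mix. Qed.

Lemma var_norm_O1 a : var_norm P (O1 W X0 X1 a) =
  (1 - a) ^+ 2 * var_norm P (fun t => W *m X0 t) + a ^+ 2 * var_norm P (fun t => W *m X1 t).
Proof. by rewrite O1_mix var_norm_mix. Qed.

Let Evec_mix a b : Evec P (mix a b) = W *m (a *: Evec P X0 + b *: Evec P X1).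
Proof.
have X0_L1 := Lvec_subset12 X0_L2; have X1_L1 := Lvec_subset12 X1_L2.
by rewrite EvecD ?Evec_mulmx ?mulmxDr -?scalemxAl -?scalemxAr //; exact: Lvec_mulmx.
Qed.

Lemma M01_O a0 a1 : M01 P (O0 W X0 X1 a0) (O1 W X0 X1 a1) =
  `|a0 + a1 - 1| * enorm (W *m (Evec P X0 - Evec P X1)).
Proof.
rewrite /M01 O0_mix O1_mix !Evec_mix -mulmxBr -enormZ scalemxAr.
by congr (enorm (W *m _)); apply/matrixP => i j; rewrite !mxE; ring.
Qed.

End gcn_outputs.

(* [(a^2 s0 + (1 - a)^2 s1) (s0 + s1) - s0 s1 = (a s0 - (1 - a) s1)^2],
   so the bound is attained at [a = s1 / (s0 + s1)]. *)
Lemma mix_sqr_ge (R : realFieldType) (s0 s1 a : R) : 0 < s0 -> 0 < s1 ->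
  s0 * s1 / (s0 + s1) <= a ^+ 2 * s0 + (1 - a) ^+ 2 * s1.
Proof.
move=> s0_gt0 s1_gt0; rewrite ler_pdivrMr ?addr_gt0 //.
have := sqr_ge0 (a * s0 - (1 - a) * s1); nra.
Qed.

Lemma ltr_ratio_small_denom (R : realFieldType) (A c K e S0 S1 : R) :
  0 < c -> c <= S0 -> 0 <= S1 -> 0 < e -> 0 < K ->
  e < c / ((`|A| + 1) * (K + 1)) -> A < (S0 + S1) / (e * K).
Proof.
move=> c_gt0 cS0 S1_ge0 e_gt0 K_gt0 e_lt.
have A_le := ler_norm A; have A_ge0 : 0 <= `|A| by [].
have den_gt0 : 0 < (`|A| + 1) * (K + 1) by apply: mulr_gt0; lra.
move: e_lt; rewrite ltr_pdivlMr // => e_lt.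
have AeK : A * (e * K) <= `|A| * (e * K) by rewrite ler_pM2r ?mulr_gt0.
have rest_gt0 : 0 < e * (`|A| + K + 1) by apply: mulr_gt0 => //; lra.
have expand : e * ((`|A| + 1) * (K + 1)) = `|A| * (e * K) + e * (`|A| + K + 1) by ring.
rewrite expand in e_lt.
rewrite ltr_pdivlMr ?mulr_gt0 //; lra.
Qed.

Theorem theorem1 (R : realType) (d : measure_display) (T : measurableType d)
  (P : probability T R) (iota k : nat) (X0 X1 : T -> 'cV[R]_iota) (W : 'M[R]_(k, iota)) :
  rvec X0 -> rvec X1 -> L2vec P X0 -> L2vec P X1 -> indep_vec P X0 X1 ->
  W != 0 ->
  0 < var_norm P (fun t => W *m X0 t) ->
  0 < var_norm P (fun t => W *m X1 t) ->
  forall A : R, exists2 delta : R, 0 < delta &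
    forall P0 P1 : R, 0 <= P0 <= 1 -> 0 <= P1 <= 1 ->
      0 < `|P0 + P1 - 1| < delta ->
      (A%:E < complexity P W X0 X1 P0 P1)%E.
Proof.
move=> mX0 mX1 X0sq X1sq indepX _ s0_gt0 s1_gt0 A.
have X0_L2 := Lvec_L2vec mX0 X0sq; have X1_L2 := Lvec_L2vec mX1 X1sq.
set s0 := var_norm P _ in s0_gt0; set s1 := var_norm P _ in s1_gt0.
set c := Num.sqrt (s0 * s1 / (s0 + s1)).
have c_gt0 : 0 < c by rewrite sqrtr_gt0 divr_gt0 ?mulr_gt0 ?addr_gt0.
set K := enorm (W *m (Evec P X0 - Evec P X1)).
have K_ge0 : 0 <= K by exact: sqrtr_ge0.
exists (c / ((`|A| + 1) * (K + 1))); first by rewrite divr_gt0 ?mulr_gt0 ?ltr_wpDl.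
move=> P0 P1 _ _ /andP[e_gt0 e_lt].
rewrite /complexity /= M01_O // -/K; case: ifPn => [_|M_neq0]; first exact: ltry.
have K_gt0 : 0 < K by rewrite lt_def K_ge0 andbT; apply: contraNneq M_neq0 => ->; rewrite mulr0.
rewrite lte_fin /S_c var_norm_O0 // var_norm_O1 // -/s0 -/s1.
apply: ltr_ratio_small_denom e_lt => //.
by rewrite /c ler_sqrt ?mix_sqr_ge // addr_ge0 // mulr_ge0 ?sqr_ge0 ?ltW.
Qed.
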